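(* Let $S\in\mathbb{R}^{n\times n_s}$ and $T\in\mathbb{R}^{n\times n_t}$, and let $\mathcal{C}_{\mathrm{LP}}=\{M\in\mathbb{R}_{\ge0}^{n_s\times n_t} : SM=T\}$, with $d$ its (affine) dimension. Let $\mathcal{F}_{\mathrm{LP}}=\{x\in\mathbb{R}^{1\times n_s} : |\{xM : M\in\mathcal{C}_{\mathrm{LP}}\}|=1\}$. Let $X$ be a finite set of test inputs (row vectors in $\mathbb{R}^{1\times n_s}$). Let $M_1$ be any mapping in $\mathcal{C}_{\mathrm{LP}}$, and let $\mathrm{vec}(M_2)$ be sampled from a proper density (absolutely continuous w.r.t. $d$-dimensional Lebesgue measure) over a $d$-dimensional ball lying in $\mathcal{C}_{\mathrm{LP}}$ centered at $\mathrm{vec}(M_1)$. Then, with probability 1, for all $x\in X$, $xM_1=xM_2$ implies $x\in\mathcal{F}_{\mathrm{LP}}$.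
   Context: $\mathrm{vec}(M)$ denotes the vectorization of the matrix $M$. Rows of $S$ are count vectors of training inputs (bags of source atoms over $n_s$ types) and rows of $T$ the corresponding output count vectors (over $n_t$ target atom types); a (relaxed) mapping is a real nonnegative matrix $M$ with output $xM$ on input $x$. A $d$-dimensional ball lying in $\mathcal{C}_{\mathrm{LP}}$ means a ball of dimension $d$ within the affine hull of $\mathcal{C}_{\mathrm{LP}}$ and contained in $\mathcal{C}_{\mathrm{LP}}$. *)

From HB Require Import structures.
From mathcomp Require Import all_boot all_order all_algebra.
From mathcomp Require Import all_classical all_reals all_analysis.
Set Implicit Arguments. Unset Strict Implicit. Unset Printing Implicit Defensive.
Import Order.TTheory GRing.Theory Num.Theory.
Local Open Scope classical_set_scope.
Local Open Scope ring_scope.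

Section Defs.
Variable R : realType.

Definition CLP (n ns nt : nat) (S : 'M[R]_(n, ns)) (T : 'M[R]_(n, nt))
  : set 'M[R]_(ns, nt) :=
  [set M : 'M[R]_(ns, nt) | (forall i j, 0 <= M i j) /\ S *m M = T].

Definition FLP (n ns nt : nat) (S : 'M[R]_(n, ns)) (T : 'M[R]_(n, nt))
  : set 'rV[R]_ns :=
  [set x : 'rV[R]_ns | exists y : 'rV[R]_nt,
      forall z, (exists2 M, CLP S T M & z = x *m M) <-> z = y].

(* Frobenius inner product = Euclidean inner product of vec(A), vec(B) *)
Definition frob_dot (m k : nat) (A B : 'M[R]_(m, k)) : R :=
  \sum_(i < m) \sum_(j < k) A i j * B i j.

Definition sqnorm (d : nat) (y : 'rV[R]_d) : R := \sum_(i < d) y 0 i ^+ 2.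

Definition lin_comb (d m k : nat) (B : 'I_d -> 'M[R]_(m, k)) (y : 'rV[R]_d)
  : 'M[R]_(m, k) := \sum_(i < d) y 0 i *: B i.

Definition box (d : nat) (a b : 'rV[R]_d) : set 'rV[R]_d :=
  [set y : 'rV[R]_d | forall i, a 0 i <= y 0 i <= b 0 i].

Definition lebesgue_null (d : nat) (A : set 'rV[R]_d) : Prop :=
  forall eps : R, 0 < eps ->
    exists a b : nat -> 'rV[R]_d,
      [/\ forall k i, a k 0 i <= b k 0 i,
          A `<=` \bigcup_k box (a k) (b k) &
          forall N, \sum_(k < N) \prod_(i < d) (b k 0 i - a k 0 i) < eps].

End Defs.

From HB Require Import structures.
From mathcomp Require Import all_boot all_order all_algebra.
From mathcomp Require Import all_classical all_reals all_analysis.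
From mathcomp Require Import ring lra zify.
From Stdlib Require Import Lia.
Set Implicit Arguments.
Unset Strict Implicit.
Unset Printing Implicit Defensive.

Import Order.TTheory GRing.Theory Num.Theory.
Local Open Scope classical_set_scope.
Local Open Scope ring_scope.

(* If x is not in F_LP then some coordinate of some x B_i is nonzero: otherwise
   x M = x M1 for every M in C_LP, because C_LP - M1 lies in the span of the
   B_i.  Then x M1 = x M2 confines the coordinate vector Y of M2 - M1 to a
   hyperplane through the origin, whose trace on a cube is covered by a grid of
   boxes of total volume O(1/N); so it is Lebesgue-null and Y avoids it almost
   surely.  A finite union over X of such events is still negligible. *)

Lemma exists_grid_cell (R : realType) (N : nat) (lo h t : R) :
  (0 < N)%N -> 0 < h -> lo <= t <= lo + N%:R * h ->
  exists k : 'I_N, lo + k%:R * h <= t <= lo + k%:R * h + h.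
Proof.
move=> N_gt0 h_gt0 /andP[lo_t t_hi].
set u := (t - lo) / h.
have u_ge0 : 0 <= u by rewrite divr_ge0 ?subr_ge0 // ltW.
have u_leN : u <= N%:R by rewrite ler_pdivrMr //; lra.
have kN : (minn (Num.truncn u) N.-1 < N)%N by lia.
suff /andP[ku uk] : (Ordinal kN)%:R <= u <= (Ordinal kN)%:R + 1.
  exists (Ordinal kN).
  rewrite ler_pdivlMr // in ku; rewrite ler_pdivrMr // mulrDl mul1r in uk.
  by apply/andP; split; lra.
have /andP[tr_u u_tr] := truncn_itv u_ge0.
rewrite /=; case: (leqP (Num.truncn u) N.-1) => tr_N.
  by rewrite -natr1 in u_tr; rewrite tr_u ltW.
have u_eqN : u = N%:R.
  by apply/le_anti; rewrite u_leN (le_trans _ tr_u) // ler_nat; lia.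
by rewrite u_eqN natr1 prednK // ler_nat leq_pred lexx.
Qed.

Lemma sum_nth_le (R : numDomainType) (T : eqType) (x0 : T) (F : T -> R)
    (s : seq T) (N : nat) :
  F x0 = 0 -> (forall x, x \in s -> 0 <= F x) ->
  \sum_(k < N) F (nth x0 s k) <= \sum_(x <- s) F x.
Proof.
move=> F0; elim: s N => [|x s IHs] [|N] F_ge0.
- by rewrite big_ord0 big_nil.
- by rewrite big_nil big1 // => k _; rewrite nth_nil F0.
- by rewrite big_ord0 big_seq sumr_ge0 // => y; apply: F_ge0.
rewrite big_ord_recl big_cons lerD2l /=.
by apply: IHs => y ys; rewrite F_ge0 // in_cons ys orbT.
Qed.

Definition box_vol (R : numDomainType) (d : nat) (a b : 'rV[R]_d) : R :=
  \prod_(i < d) (b 0 i - a 0 i).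

(* Positive dimension is needed to pad a finite cover with the degenerate box
   (0, 0): in dimension 0 every box has volume 1 (empty product). *)
Lemma lebesgue_null_finite_covers (R : realType) (d : nat) (A : set 'rV[R]_d.+1) :
  (forall eps : R, 0 < eps -> exists s : seq ('rV[R]_d.+1 * 'rV[R]_d.+1),
     [/\ forall p, p \in s -> forall i, p.1 0 i <= p.2 0 i,
         A `<=` [set y | exists2 p, p \in s & box p.1 p.2 y] &
         \sum_(p <- s) box_vol p.1 p.2 < eps]) ->
  lebesgue_null A.
Proof.
move=> covers eps /covers[s [s_ord A_cov s_vol]].
pose p0 : 'rV[R]_d.+1 * 'rV[R]_d.+1 := (0, 0).
exists (fun k => (nth p0 s k).1), (fun k => (nth p0 s k).2); split.
- move=> k i; case: (ltnP k (size s)) => [ks | sk].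
    by apply: s_ord; rewrite mem_nth.
  by rewrite nth_default.
- by move=> y /A_cov[p ps yp]; exists (index p s) => //; rewrite nth_index.
- move=> N; apply: le_lt_trans s_vol; apply: sum_nth_le => [|p ps].
    by rewrite /box_vol big_ord_recl /= !mxE subrr mul0r.
  by rewrite /box_vol prodr_ge0 // => i _; rewrite subr_ge0 s_ord.
Qed.

Section HyperplaneCubeCover.
Variables (R : realType) (d : nat) (a : 'I_d.+1 -> R) (i0 : 'I_d.+1) (r : R) (N : nat).
Hypotheses (a_i0 : a i0 = 1) (r_gt0 : 0 < r) (N_gt0 : (0 < N)%N).

Let K : R := \sum_i `|a i|.
Let h : R := 2 * r / N%:R.
Let w : R := K * h / N%:R.

Let N_neq0 : N%:R != 0 :> R. Proof. by rewrite pnatr_eq0 -lt0n. Qed.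
Let K_ge1 : 1 <= K.
Proof. by rewrite /K (bigD1 i0) //= a_i0 normr1 lerDl sumr_ge0. Qed.
Let h_gt0 : 0 < h. Proof. by rewrite divr_gt0 ?ltr0n // mulr_gt0. Qed.
Let w_gt0 : 0 < w.
Proof. by rewrite divr_gt0 ?ltr0n // mulr_gt0 //; apply: lt_le_trans ltr01 K_ge1. Qed.
Let Nh : N%:R * h = 2 * r. Proof. by rewrite mulrC divfK. Qed.
Let Nw : N%:R * w = K * h. Proof. by rewrite mulrC divfK. Qed.

(* On the cell [g] of the grid in the coordinates [i != i0], the hyperplane
   forces [y 0 i0] within [K * h / 2] of [centre g]; that window is cut into
   [N] pieces indexed by [g i0]. *)
Let centre (g : 'I_d.+1 -> 'I_N) :=
  - \sum_(i | i != i0) a i * (- r + (g i)%:R * h + h / 2).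
Let side i := if i == i0 then w else h.
Let lo (g : {ffun 'I_d.+1 -> 'I_N}) : 'rV[R]_d.+1 :=
  \row_i if i == i0 then centre g - K * h / 2 + (g i)%:R * w
         else - r + (g i)%:R * h.
Let hi g : 'rV[R]_d.+1 := \row_i (lo g 0 i + side i).

Let hyperplane_cube_covered (y : 'rV[R]_d.+1) :
  (forall i, - r <= y 0 i <= r) -> \sum_i a i * y 0 i = 0 ->
  exists g, box (lo g) (hi g) y.
Proof.
move=> y_cube y_hyp.
have cell i : exists k : 'I_N, - r + k%:R * h <= y 0 i <= - r + k%:R * h + h.
  apply: exists_grid_cell => //; rewrite Nh.
  by have /andP[] := y_cube i; move=> *; apply/andP; split; lra.
pose f i := xchoose (cell i).
have f_cell i := xchooseP (cell i).
have near_centre : `|y 0 i0 - centre f| <= K * h / 2.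
  have -> : y 0 i0 = - \sum_(i | i != i0) a i * y 0 i.
    by move: y_hyp; rewrite (bigD1 i0) //= a_i0 mul1r => /eqP; rewrite addr_eq0 => /eqP.
  rewrite /centre opprK addrC -sumrB.
  apply: le_trans (ler_norm_sum _ _ _) _.
  apply: le_trans (_ : \sum_(i | i != i0) `|a i| * (h / 2) <= _).
    apply: ler_sum => i _; rewrite -mulrBr normrM ler_wpM2l // ler_norml.
    by have /andP[] := f_cell i; move=> *; apply/andP; split; lra.
  rewrite -mulr_suml -mulrA ler_wpM2r //; first exact: divr_ge0 (ltW h_gt0) (ler0n _ 2).
  by rewrite /K [leRHS](bigD1 i0) //= lerDr.
have [k k_cell] : exists k : 'I_N, centre f - K * h / 2 + k%:R * w <= y 0 i0
    <= centre f - K * h / 2 + k%:R * w + w.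
  apply: exists_grid_cell => //; rewrite Nw.
  by move: near_centre; rewrite ler_norml => /andP[*]; apply/andP; split; lra.
pose g := [ffun i => if i == i0 then k else f i].
have centre_g : centre g = centre f.
  by congr (- _); apply: eq_bigr => i /negbTE i_neq; rewrite ffunE i_neq.
exists g => i; rewrite !mxE /side ffunE.
by case: eqP => [-> | _]; [rewrite centre_g | apply: f_cell].
Qed.

Let hyperplane_cube_cover_vol :
  \sum_(g : {ffun 'I_d.+1 -> 'I_N}) box_vol (lo g) (hi g) = K * (2 * r) ^+ d.+1 / N%:R.
Proof.
have vol g : box_vol (lo g) (hi g) = w * h ^+ d.
  rewrite /box_vol (bigD1 i0) //= (eq_bigr (fun=> h)) => [|i /negbTE i_neq].
    by rewrite prodr_const cardC1 card_ord !mxE /side eqxx addrC addKr.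
  by rewrite !mxE /side i_neq addrC addKr.
rewrite (eq_bigr _ (fun g _ => vol g)) sumr_const card_ffun !card_ord -Nh.
by rewrite -[LHS]mulr_natr natrX /w [(_ * h) ^+ _]exprMn !exprS; field; exact: N_neq0.
Qed.

Lemma hyperplane_cube_finite_cover :
  exists s : seq ('rV[R]_d.+1 * 'rV[R]_d.+1),
  [/\ forall p, p \in s -> forall i, p.1 0 i <= p.2 0 i,
      [set y : 'rV[R]_d.+1 | (forall i, - r <= y 0 i <= r) /\ \sum_i a i * y 0 i = 0]
        `<=` [set y | exists2 p, p \in s & box p.1 p.2 y] &
      \sum_(p <- s) box_vol p.1 p.2 = K * (2 * r) ^+ d.+1 / N%:R].
Proof.
exists [seq (lo g, hi g) | g <- enum {ffun 'I_d.+1 -> 'I_N}]; split.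
- move=> _ /mapP[g _ ->] i; rewrite /hi [leRHS]mxE lerDl /side.
  by case: ifP => _; apply: ltW; [apply: w_gt0 | apply: h_gt0].
- move=> y [y_cube y_hyp]; have [g y_box] := hyperplane_cube_covered y_cube y_hyp.
  by exists (lo g, hi g) => //; apply: map_f; rewrite mem_enum.
- by rewrite big_map big_enum /= hyperplane_cube_cover_vol.
Qed.

End HyperplaneCubeCover.

Lemma hyperplane_cube_null (R : realType) (d : nat) (a : 'I_d -> R) (i0 : 'I_d) (r : R) :
  0 < r -> a i0 != 0 ->
  lebesgue_null [set y : 'rV[R]_d | (forall i, - r <= y 0 i <= r) /\ \sum_i a i * y 0 i = 0].
Proof.
case: d a i0 => [|d] a i0; first by case: i0.
move=> r_gt0 a_i0; pose b i := a i / a i0.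
have b_i0 : b i0 = 1 by rewrite /b divff.
have b_hyp y : \sum_i a i * y 0 i = 0 -> \sum_i b i * y 0 i = 0.
  by move=> y_hyp; under eq_bigr do rewrite mulrAC; rewrite -mulr_suml y_hyp mul0r.
apply: lebesgue_null_finite_covers => eps eps_gt0.
set C := (\sum_i `|b i|) * (2 * r) ^+ d.+1 / eps.
have C_ge0 : 0 <= C by rewrite /C divr_ge0 ?mulr_ge0 ?sumr_ge0 ?exprn_ge0 ?ltW //; lra.
have C_lt := archi_boundP C_ge0.
have N_gt0 : (0 < Num.bound C)%N by rewrite -(ltr_nat R); apply: le_lt_trans C_lt.
have [s [s_ord s_cov s_vol]] := hyperplane_cube_finite_cover b_i0 r_gt0 N_gt0.
exists s; split => // [y [y_cube /b_hyp y_hyp] | ]; first exact: s_cov.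
by rewrite s_vol ltr_pdivrMr ?ltr0n // [eps * _]mulrC -ltr_pdivrMr.
Qed.

Lemma negligible_exists_seq d (T : ringOfSetsType d) (R : realFieldType)
    (mu : {content set T -> \bar R}) (I : eqType) (X : seq I) (F : I -> set T) :
  (forall x, x \in X -> mu.-negligible (F x)) ->
  mu.-negligible [set w | exists2 x, x \in X & F x w].
Proof.
elim: X => [|x X IHX] FX; first by apply: negligibleS (negligible_set0 mu) => w [].
apply: negligibleS (negligibleU (FX x (mem_head _ _)) (IHX _)) => [w [y] | y yX].
  by rewrite in_cons => /orP[/eqP-> | yX] Fyw; [left | right; exists y].
by apply: FX; rewrite in_cons yX orbT.
Qed.

Lemma sqnorm_lt_coord (R : realType) (d : nat) (y : 'rV[R]_d) (r : R) :
  0 < r -> sqnorm y < r ^+ 2 -> forall i, - r <= y 0 i <= r.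
Proof.
move=> r_gt0 y_lt i.
have yi_le : y 0 i ^+ 2 <= sqnorm y.
  by rewrite /sqnorm (bigD1 i) //= lerDl sumr_ge0 // => k _; rewrite sqr_ge0.
by apply/andP; split; nra.
Qed.

Lemma mulmx_lin_comb (R : realType) (d ns nt : nat) (B : 'I_d -> 'M[R]_(ns, nt))
    (x : 'rV[R]_ns) (y : 'rV[R]_d) :
  x *m lin_comb B y = \sum_i y 0 i *: (x *m B i).
Proof. by rewrite mulmx_sumr; apply: eq_bigr => i _; rewrite scalemxAr. Qed.

Lemma notFLP_basis_image_neq0 (R : realType) (n ns nt : nat)
    (S : 'M[R]_(n, ns)) (T : 'M[R]_(n, nt)) (M1 : 'M[R]_(ns, nt)) (d : nat)
    (B : 'I_d -> 'M[R]_(ns, nt)) (x : 'rV[R]_ns) :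
  CLP S T M1 ->
  (forall M M', CLP S T M -> CLP S T M' -> exists y : 'rV[R]_d, M - M' = lin_comb B y) ->
  ~ FLP S T x -> exists i j, (x *m B i) 0 j != 0.
Proof.
move=> HM1 Bspan xF; apply: contrapT => xB_eq0; apply: xF.
have xB0 i : x *m B i = 0.
  apply/rowP => j; rewrite [RHS]mxE; apply: contrapT => xBij.
  by apply: xB_eq0; exists i, j; exact/eqP.
exists (x *m M1) => z; split=> [[M HM ->] | ->]; last by exists M1.
have [y <-] : exists y, M1 + lin_comb B y = M.
  by have [y Hy] := Bspan _ _ HM HM1; exists y; rewrite -Hy addrC subrK.
by rewrite mulmxDr mulmx_lin_comb big1 ?addr0 // => i _; rewrite xB0 scaler0.
Qed.

Theorem proposition3 (R : realType) (n ns nt : nat)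
  (S : 'M[R]_(n, ns)) (T : 'M[R]_(n, nt))
  (X : seq 'rV[R]_ns)
  (M1 : 'M[R]_(ns, nt)) (HM1 : CLP S T M1)
  (* d and an orthonormal basis B of the direction space of aff(C_LP) *)
  (d : nat) (B : 'I_d -> 'M[R]_(ns, nt))
  (Borth : forall i j, frob_dot (B i) (B j) = (i == j)%:R)
  (Bspan : forall M M', CLP S T M -> CLP S T M' ->
             exists y : 'rV[R]_d, M - M' = lin_comb B y)
  (* the d-dimensional ball of radius r centred at M1 lies in C_LP *)
  (r : R) (Hr : 0 < r)
  (Hball : forall y : 'rV[R]_d, sqnorm y < r ^+ 2 -> CLP S T (M1 + lin_comb B y))
  (* the random point: vec(M2) = vec(M1 + sum_i Y_i B_i) *)
  (dO : measure_display) (Omega : measurableType dO)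
  (P : probability Omega R) (Y : Omega -> 'rV[R]_d)
  (Hsupp : P.-negligible [set w | ~ (sqnorm (Y w) < r ^+ 2)])
  (Hac : forall A : set 'rV[R]_d, lebesgue_null A -> P.-negligible (Y @^-1` A)) :
  P.-negligible
    [set w | exists2 x, x \in X &
       x *m M1 = x *m (M1 + lin_comb B (Y w)) /\ ~ FLP S T x].
Proof.
have slice_negligible x : P.-negligible
    [set w | ~ FLP S T x /\ sqnorm (Y w) < r ^+ 2 /\ x *m lin_comb B (Y w) = 0].
  have [xF | xF] := pselect (FLP S T x).
    by apply: negligibleS (negligible_set0 P) => w [].
  have [i0 [j xB_neq0]] := notFLP_basis_image_neq0 HM1 Bspan xF.
  have slice_null := @hyperplane_cube_null _ _ (fun i => (x *m B i) 0 j) _ _ Hr xB_neq0.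
  apply: negligibleS (Hac _ slice_null) => w [_ [Y_lt xY0]].
  split; first exact: sqnorm_lt_coord.
  have := congr1 (fun m : 'rV[R]_nt => m 0 j) xY0.
  rewrite mulmx_lin_comb summxE [RHS]mxE => sum_eq0; rewrite -[RHS]sum_eq0.
  by apply: eq_bigr => i _; rewrite [RHS]mxE mulrC.
apply: negligibleS
  (negligibleU Hsupp (negligible_exists_seq (X := X) (fun x _ => slice_negligible x))).
move=> w [x xX [xM_eq xF]].
have [Y_lt | Y_nlt] := pselect (sqnorm (Y w) < r ^+ 2); last by left.
right; exists x => //; split=> //; split=> //.
by move: xM_eq; rewrite mulmxDr -{1}[x *m M1]addr0 => /addrI <-.
Qed.
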